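(* Let $D=\{(x,t)\in[-2,2]^2: x^2-2\le t\}$, let $p\colon D\to[-2,2]$, $p(x,t)=t$, and let $\phi\colon D\to D$, $\phi(x,t)=(x^2-2,\;x^2(t-2)+2)$. Suppose $E\subset D$ is a Borel set such that (i) $\phi(E)\subset E$ modulo Lebesgue-null sets (i.e. $\phi(E)\setminus E$ has two-dimensional Lebesgue measure zero), and (ii) for almost every $t\in p(E)$, the fiber $p^{-1}(t)=\{(x,t): x^2\le t+2\}$ is, up to a set of one-dimensional Lebesgue measure zero in the fiber, either contained in $E$ or contained in $D\setminus E$. Then $E$ is either Lebesgue-null or Lebesgue-conull in $D$.
   Context: Measures on $D$ are two-dimensional Lebesgue measure; measures on fibers $p^{-1}(t)$ (horizontal segments) are one-dimensional Lebesgue measure; ''almost every $t$'' refers to one-dimensional Lebesgue measure. *)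

From HB Require Import structures.
From mathcomp Require Import all_boot all_order all_algebra.
From mathcomp Require Import all_classical all_reals all_analysis.
Set Implicit Arguments. Unset Strict Implicit. Unset Printing Implicit Defensive.
Import Order.TTheory GRing.Theory Num.Theory.
Local Open Scope classical_set_scope.
Local Open Scope ring_scope.

(* Points of R^2 are pairs (x, t) : R * R, with the product (= Borel) sigma-algebra. *)

Definition domD (R : realType) : set (R * R) :=
  [set z | -2 <= z.1 <= 2 /\ -2 <= z.2 <= 2 /\ z.1 ^+ 2 - 2 <= z.2].
Arguments domD R : clear implicits.

Definition projp (R : realType) (z : R * R) : R := z.2.

Definition phimap (R : realType) (z : R * R) : R * R :=
  (z.1 ^+ 2 - 2, z.1 ^+ 2 * (z.2 - 2) + 2).

Definition leb2 (R : realType) : set (R * R) -> \bar R :=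
  ((@lebesgue_measure R) \x (@lebesgue_measure R))%E.
Arguments leb2 R : clear implicits.

(* the fiber p^{-1}(t) = {(x,t) in D}, seen as a subset of the real line (x-coordinate) *)
Definition fiberx (R : realType) (t : R) : set R :=
  [set x | domD R (x, t)].

Definition slicex (R : realType) (E : set (R * R)) (t : R) : set R :=
  [set x | E (x, t)].

From HB Require Import structures.
From mathcomp Require Import all_boot all_order all_algebra.
From mathcomp Require Import all_classical all_reals all_analysis.
From mathcomp Require Import measurable_realfun.
From mathcomp Require Import lra ring.
Import Order.TTheory GRing.Theory Num.Theory.
Local Open Scope classical_set_scope.
Local Open Scope ring_scope.

(* Let F be the set of heights t whose fibre lies in E up to a null set, and
   P = p^-1(F).  By Fubini and (ii), E and P differ by a null set.  The map
   phi is (x, s) |-> (x^2 - 2, s) composed with a map that is affine with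
   nonzero slope on almost every vertical line, so phi^-1 preserves null
   sets; with (i) this makes P \ phi^-1(P) null.  Since phi maps the fibre
   over t onto heights [t^2 - 2, 2], Lipschitz images of null sets being null
   give: for almost every t in F, almost all of [t^2 - 2, 2] lies in F.  If F
   meets [-2, 2] in a set of positive measure, let c be the least a such that
   almost all of [a, 2] lies in F; were c > -2, a height t in F with
   |t| < sqrt (c + 2) would give t^2 - 2 < c.  So either F, hence E, is null,
   or F is conull in [-2, 2], hence E is conull in D. *)

Section lipschitz_negligible.
Context {R : realType}.
Local Notation lambda := (@lebesgue_measure R).
(* images of null sets need not be measurable *)
Local Notation lambda_out := ((wlength (R:=R) idfun)^*)%mu.

Lemma lipschitz_image_itvoo (f : R -> R) (k : R) (B : set R) (a b : R) :
  0 <= k -> k.-lipschitz_B f ->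
  (lambda_out (f @` (`]a, b[ `&` B)) <= (2 * k)%:E * wlength idfun `]a, b[)%E.
Proof.
move=> k0 lipf.
have [[x0 [abx0 Bx0]]|] := pselect (exists x, (`]a, b[ `&` B) x); last first.
  move=> noB; rewrite (_ : _ `&` _ = set0) ?image_set0 ?outer_measure0.
    by rewrite mule_ge0 ?wlength_ge0// lee_fin mulr_ge0.
  by apply/seteqP; split => // x Bx; apply: noB; exists x.
move: abx0; rewrite /= in_itv/= => /andP[ax0 x0b].
have sub : f @` (`]a, b[ `&` B) `<=` `[f x0 - k * (b - a), f x0 + k * (b - a)].
  move=> _ [x [abx Bx] <-]; rewrite /= in_itv/=.
  have : `|f x - f x0| <= k * (b - a).
    apply: le_trans (lipf (x, x0) (conj Bx Bx0)) _; apply: ler_wpM2l => //=.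
    move: abx; rewrite /= in_itv/= => /andP[ax xb].
    by rewrite ler_norml; apply/andP; split; lra.
  by rewrite ler_norml => /andP[? ?]; apply/andP; split; lra.
apply: le_trans (le_outer_measure lambda_out _ _ sub) _.
rewrite -[X in (X <= _)%E]/(lambda _) lebesgue_measure_itv/= wlength_itv/= !lte_fin.
have -> : a < b by lra.
by case: ifPn => _; rewrite -?EFinD -?EFinM lee_fin; nra.
Qed.

Lemma lipschitz_image_negligible (f : R -> R) (k : R) (B A : set R) :
  0 <= k -> k.-lipschitz_B f -> A `<=` B -> lambda.-negligible A ->
  lambda.-negligible (f @` A).
Proof.
move=> k0 lipf AB /negligible_outer_measure A0; apply/negligible_outer_measure.
apply/eqP; rewrite eq_le outer_measure_ge0 andbT.
apply/lee_addgt0Pr => e e0; rewrite add0e.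
have ke0 : 0 < e / (2 * k + 1) by rewrite divr_gt0// ltr_wpDl// mulr_ge0.
have : (lambda_out A < (e / (2 * k + 1))%:E)%E by rewrite A0 lte_fin.
rewrite outer_measure_open_itv_cover => /ereal_inf_lt[_ [I [Iitv AI] <-] Ie].
have sub : f @` A `<=` \bigcup_n (f @` (I n `&` B)).
  move=> _ [x Ax <-]; have [n _ Inx] := AI x Ax.
  by exists n => //; exists x => //; split => //; exact: AB.
apply: le_trans (le_outer_measure lambda_out _ _ sub) _.
apply: le_trans (outer_measure_sigma_subadditive _ _) _.
apply: (@le_trans _ _ (\sum_(0 <= n <oo) ((2 * k)%:E * wlength idfun (I n)))%E).
  apply: lee_nneseries => // n _.
  by have [[a b] /= ->] := Iitv n; exact: lipschitz_image_itvoo.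
rewrite nneseriesZl//.
apply: (@le_trans _ _ ((2 * k)%:E * (e / (2 * k + 1))%:E)%E).
  by apply: lee_wpmul2l; [rewrite lee_fin mulr_ge0|exact: ltW].
rewrite -EFinM lee_fin mulrA ler_pdivrMr ?ltr_wpDl ?mulr_ge0// mulrC ler_pM2l//.
lra.
Qed.

Lemma negligible_set1 (a : R) : lambda.-negligible [set a].
Proof. exact/negligibleP/lebesgue_measure_set1. Qed.

Lemma sqrt_lipschitz (c : R) :
  0 < c -> c^-1.-lipschitz_[set u | c ^+ 2 <= u] (@Num.sqrt R).
Proof.
move=> c0 [u v] [/= cu cv].
have c2_ge0 : 0 <= c ^+ 2 by exact: sqr_ge0.
have u0 : 0 <= u := le_trans c2_ge0 cu.
have v0 : 0 <= v := le_trans c2_ge0 cv.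
have cs w : c ^+ 2 <= w -> c <= Num.sqrt w.
  move=> cw; rewrite -(ger0_norm (ltW c0)) -sqrtr_sqr ler_sqrt//.
  exact: le_trans cw.
have /cs csu := cu; have /cs csv := cv.
rewrite /= ler_pdivlMl//.
have -> : u - v = (Num.sqrt u - Num.sqrt v) * (Num.sqrt u + Num.sqrt v).
  by rewrite -subr_sqr !sqr_sqrtr.
rewrite normrM [`|_ + Num.sqrt v|]ger0_norm; last by lra.
by rewrite mulrC; apply: ler_wpM2l => //; lra.
Qed.

Lemma negligible_preimage_sqrD (c : R) (A : set R) :
  lambda.-negligible A -> lambda.-negligible [set x | A (x ^+ 2 + c)].
Proof.
move=> nA.
(* on [1/(n+1) <= |x|], |x| = sqrt (x^2 + c - c) with sqrt Lipschitz there *)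
pose S n := [set y : R | n.+1%:R^-1 ^+ 2 <= y - c].
pose Q := \bigcup_n (fun y => Num.sqrt (y - c)) @` (A `&` S n).
have nQ : lambda.-negligible Q.
  apply: negligible_bigcup => n.
  apply: (@lipschitz_image_negligible _ n.+1%:R^-1^-1 (S n)) => //.
  - move=> [x y] [/= Sx Sy]; rewrite (_ : x - y = (x - c) - (y - c)); last by ring.
    have n_gt0 : 0 < n.+1%:R^-1 :> R by rewrite invr_gt0.
    exact: (sqrt_lipschitz _ n_gt0 (x - c, y - c) (conj Sx Sy)).
  - by apply: negligibleS nA => ? [].
have nQN : lambda.-negligible (-%R @` Q).
  apply: (@lipschitz_image_negligible _ 1 setT) => //.
  by move=> [x y] _; rewrite /= mul1r -opprD normrN.
apply: negligibleS (negligibleU (negligibleU (negligible_set1 0) nQ) nQN).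
move=> x /= Ax; have [->|x0] := eqVneq x 0; first by left; left.
have Qx : Q `|x|.
  exists (Num.truncn `|x|^-1) => //; exists (x ^+ 2 + c); last first.
    by rewrite addrK sqrtr_sqr.
  split => //; rewrite /S/= addrK -[x ^+ 2]real_normK ?num_real//.
  rewrite lerXn2r ?nnegrE ?invr_ge0//; apply: ltW; rewrite -invf_plt ?posrE ?normr_gt0//.
  exact: truncnS_gt.
have [x_gt0|x_le0] := ltP 0 x; first by left; right; rewrite -(gtr0_norm x_gt0).
by right; exists `|x|; rewrite // ler0_norm ?opprK.
Qed.

End lipschitz_negligible.

Lemma ge0_integral_eq0_negligible d (T : measurableType d) (R : realType)
    (mu : {measure set T -> \bar R}) (f : T -> \bar R) :
  measurable_fun setT f -> (forall x, (0 <= f x)%E) ->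
  (\int[mu]_x f x = 0)%E <-> mu.-negligible [set x | f x != 0].
Proof.
move=> mf f0; have -> : (\int[mu]_x f x = \int[mu]_x `|f x|)%E.
  by apply: eq_integral => x _; rewrite gee0_abs.
rewrite ae_eq_integral_abs//; split => -[N [mN N0 sub]]; exists N; split => //.
- by move=> x /= /eqP fx0; apply: sub => /(_ I).
- by move=> x /= fx0; apply: sub; apply/eqP => fx; apply: fx0.
Qed.

Section negligible_sections.
Context {d1 d2} {T1 : measurableType d1} {T2 : measurableType d2} {R : realType}.
Variables (m1 : {sigma_finite_measure set T1 -> \bar R})
  (m2 : {sigma_finite_measure set T2 -> \bar R}).
Implicit Types A : set (T1 * T2).
Local Open Scope ereal_scope.

Let nonnegligible_xsectionE A : measurable A ->
  [set x | ~ m2.-negligible (xsection A x)] = [set x | m2 (xsection A x) != 0].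
Proof.
move=> mA; apply: eq_set => x; rewrite propeqE.
by rewrite (negligibleP _ (measurable_xsection _ mA)); split => /eqP.
Qed.

Let nonnegligible_ysectionE A : measurable A ->
  [set y | ~ m1.-negligible (ysection A y)] = [set y | m1 (ysection A y) != 0].
Proof.
move=> mA; apply: eq_set => y; rewrite propeqE.
by rewrite (negligibleP _ (measurable_ysection _ mA)); split => /eqP.
Qed.

Lemma negligible_xsectionP A : measurable A ->
  (m1 \x m2).-negligible A <-> m1.-negligible [set x | ~ m2.-negligible (xsection A x)].
Proof.
move=> mA; rewrite negligibleP// nonnegligible_xsectionE//.
apply: ge0_integral_eq0_negligible; first exact: measurable_fun_xsection.
by move=> x; exact: measure_ge0.
Qed.

Lemma negligible_ysectionP A : measurable A ->
  (m1 \x m2).-negligible A <-> m2.-negligible [set y | ~ m1.-negligible (ysection A y)].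
Proof.
move=> mA; rewrite negligibleP// nonnegligible_ysectionE//.
have := indic_fubini_tonelli m1 m2 mA.
rewrite indic_fubini_tonelli_FE// indic_fubini_tonelli_GE// => fubini.
rewrite -[_ A]/(\int[m1]_x (m2 \o xsection A) x) fubini.
apply: ge0_integral_eq0_negligible; first exact: measurable_fun_ysection.
by move=> y; exact: measure_ge0.
Qed.

Lemma measurable_negligible_ysection A : measurable A ->
  measurable [set y | m1.-negligible (ysection A y)].
Proof.
move=> mA; rewrite (_ : [set y | _] = (m1 \o ysection A) @^-1` [set 0]).
  by rewrite -[X in measurable X]setTI; exact: measurable_fun_ysection.
apply/seteqP; split => y; rewrite /= (negligibleP _ (measurable_ysection _ mA)) //.
Qed.

Lemma negligible_setTX (S : set T2) : m2.-negligible S ->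
  (m1 \x m2).-negligible (setT `*` S).
Proof.
move=> [S' [mS' S'0 SS']]; exists (setT `*` S'); split.
- exact: measurableX.
- by rewrite product_measure1E// S'0 mule0.
- by move=> z [_ /SS'].
Qed.

End negligible_sections.

Section plane.
Context {R : realType}.
Local Notation lambda := (@lebesgue_measure R).
Local Notation lambda2 := (lambda \x lambda)%E.

Lemma negligible_preimage_affine (a b : R) (A : set R) : a != 0 ->
  lambda.-negligible A -> lambda.-negligible [set t | A (a * t + b)].
Proof.
move=> a0 nA.
have lip : `|a|^-1.-lipschitz (fun s => (s - b) / a).
  by move=> [s u] _; rewrite /= -mulrBl opprB addrA subrK normrM normfV mulrC.
apply: negligibleS (lipschitz_image_negligible _ _ _ _ _ lip (subsetT A) nA).
- by move=> t At; exists (a * t + b) => //; rewrite addrK [a * t]mulrC mulfK.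
- by rewrite invr_ge0.
Qed.

Lemma negligible_preimage_sqrD_fst (c : R) (M : set (R * R)) :
  lambda2.-negligible M -> lambda2.-negligible [set z | M (z.1 ^+ 2 + c, z.2)].
Proof.
move=> [M' [mM' M'0 MM']].
pose g (z : R * R) := (z.1 ^+ 2 + c, z.2).
have mg : measurable_fun setT g.
  apply: measurable_fun_pair => //=.
  by apply: measurable_funD => //; apply: measurable_funX; exact: measurable_fst.
have mgM' : measurable (g @^-1` M') by rewrite -[X in measurable X]setTI; exact: mg.
suff : lambda2.-negligible (g @^-1` M') by apply: negligibleS => z /MM'.
apply/negligible_ysectionP => //.
have nM' : lambda.-negligible [set t | ~ lambda.-negligible (ysection M' t)].
  by apply/(negligible_ysectionP _ _ _ mM'); exists M'; split.
apply: negligibleS nM' => t; apply: contra_not => nM't.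
by apply: negligibleS (negligible_preimage_sqrD c _ nM't) => x; rewrite /ysection/= !inE.
Qed.

Lemma negligible_preimage_affine_snd (f g : R -> R) (M : set (R * R)) :
  measurable_fun setT f -> measurable_fun setT g ->
  lambda.-negligible [set x | f x = 0] -> lambda2.-negligible M ->
  lambda2.-negligible [set z | M (z.1, f z.1 * z.2 + g z.1)].
Proof.
move=> mf mg nf [M' [mM' M'0 MM']].
pose h (z : R * R) := (z.1, f z.1 * z.2 + g z.1).
have mh : measurable_fun setT h.
  apply: measurable_fun_pair => //=; apply: measurable_funD.
  - by apply: measurable_funM; [exact: measurableT_comp|exact: measurable_snd].
  - exact: measurableT_comp.
have mhM' : measurable (h @^-1` M') by rewrite -[X in measurable X]setTI; exact: mh.
suff : lambda2.-negligible (h @^-1` M') by apply: negligibleS => z /MM'.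
apply/negligible_xsectionP => //.
have nM' : lambda.-negligible [set x | ~ lambda.-negligible (xsection M' x)].
  by apply/(negligible_xsectionP _ _ _ mM'); exists M'; split.
apply: negligibleS (negligibleU nf nM') => x nhx.
have [fx0|fx0] := eqVneq (f x) 0; [by left|right]; apply: contra_not nhx => nM'x.
apply: negligibleS (negligible_preimage_affine _ (g x) _ fx0 nM'x) => t.
by rewrite /xsection/= !inE.
Qed.

Lemma measurable_phimap : measurable_fun setT (@phimap R).
Proof.
have mx2 : measurable_fun setT (fun z : R * R => z.1 ^+ 2).
  by apply: measurable_funX; exact: measurable_fst.
apply: measurable_fun_pair; first exact: measurable_funB.
apply: measurable_funD => //; apply: measurable_funM => //.
by apply: measurable_funB => //; exact: measurable_snd.
Qed.

Lemma negligible_preimage_phimap (M : set (R * R)) :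
  lambda2.-negligible M -> lambda2.-negligible (@phimap R @^-1` M).
Proof.
move=> /(negligible_preimage_sqrD_fst (-2)) nM.
have msqr : measurable_fun setT (fun x : R => x ^+ 2) by exact: measurable_funX.
have n0 : lambda.-negligible [set x : R | x ^+ 2 = 0].
  by apply: negligibleS (negligible_set1 0) => x /= /eqP; rewrite sqrf_eq0 => /eqP.
have mg : measurable_fun setT (fun x : R => 2 - x ^+ 2 * 2).
  by apply: measurable_funB => //; exact: measurable_funM.
apply: negligibleS (negligible_preimage_affine_snd _ _ _ msqr mg n0 nM) => z.
by rewrite /phimap/= (_ : _ * (_ - 2) + 2 = z.1 ^+ 2 * z.2 + (2 - z.1 ^+ 2 * 2)) //; ring.
Qed.

End plane.

Lemma nonnegligible_witness {d} {T : semiRingOfSetsType d} {R : realFieldType}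
    {mu : {content set T -> \bar R}} {A N : set T} :
  ~ mu.-negligible A -> mu.-negligible N -> exists2 x, A x & ~ N x.
Proof.
move=> nA nN; apply: contrapT => noA; apply: nA; apply: negligibleS nN => x Ax.
by apply: contrapT => Nx; apply: noA; exists x.
Qed.

Section real_line.
Context {R : realType}.
Local Notation lambda := (@lebesgue_measure R).

Lemma itvoo_nonnegligible (a b : R) : a < b -> ~ lambda.-negligible `]a, b[.
Proof.
move=> ab /(negligibleP lambda (measurable_itv `]a, b[)) ab0.
have := lebesgue_measure_itv `]a, b[.
rewrite [X in X = _ -> _]ab0 /= lte_fin ab -EFinD => /esym/eqP.
by rewrite eqe subr_eq0 gt_eqF.
Qed.

Lemma negligible_itvcc_setD_inf (A F : set R) (b : R) : A !=set0 -> has_lbound A ->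
  (forall a, A a -> lambda.-negligible (`[a, b] `\` F)) ->
  lambda.-negligible (`[inf A, b] `\` F).
Proof.
move=> A0 Alb nAF; set c := inf A.
have nF n : lambda.-negligible (`[c + n.+1%:R^-1, b] `\` F).
  have [a Aa ac] : exists2 a, A a & a < c + n.+1%:R^-1.
    by apply: inf_lt => //; rewrite ltrDl invr_gt0.
  apply: negligibleS (nAF a Aa) => u [/= /[!in_itv]/= /andP[cu ub] nFu]; split => //.
  by rewrite ub andbT (le_trans (ltW ac) cu).
apply: negligibleS (negligibleU (negligible_set1 c) (negligible_bigcup nF)).
move=> u [/= /[!in_itv]/= /andP[cu ub] nFu]; have [->|uc] := eqVneq u c; [by left|right].
have : `]c, b]%classic u by rewrite /= in_itv/= ub andbT lt_neqAle eq_sym uc.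
by rewrite itv_open_bnd_bigcup => -[n _ Inu]; exists n.
Qed.

Section propagation.
Variables (F Bad : set R) (nBad : lambda.-negligible Bad).
Hypothesis propagate : forall t, -2 < t < 2 -> F t -> ~ Bad t ->
  lambda.-negligible (`[t ^+ 2 - 2, 2] `\` F).

Lemma negligible_itvcc_setD_propagate (t0 : R) : -2 < t0 < 2 -> F t0 -> ~ Bad t0 ->
  lambda.-negligible (`[-2, 2] `\` F).
Proof.
move=> t0_itv Ft0 nBt0.
pose A := [set a | -2 <= a /\ lambda.-negligible (`[a, 2] `\` F)].
have At0 : A (t0 ^+ 2 - 2) by split; [rewrite lerBrDr addNr sqr_ge0|exact: propagate].
have Alb : has_lbound A by exists (-2) => a [].
have nAF : lambda.-negligible (`[inf A, 2] `\` F).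
  by apply: negligible_itvcc_setD_inf => //; [exists (t0 ^+ 2 - 2)|move=> a []].
suff <- : inf A = -2 by [].
apply/eqP; rewrite eq_le lb_le_inf ?andbT; [|by exists (t0 ^+ 2 - 2)|by move=> a []].
rewrite leNgt; apply/negP; set c := inf A => c_gt.
have c_lt : c < 2 by apply: le_lt_trans (ge_inf Alb At0) _; nra.
pose s := Num.sqrt (c + 2).
have s2 : s ^+ 2 = c + 2 by rewrite sqr_sqrtr//; lra.
have s_gt0 : 0 < s by rewrite sqrtr_gt0; lra.
have cs : c < s by nra.
have ms : Num.max c (- s) < s by rewrite gt_max cs /=; lra.
(* a height t in F with |t| < s would put t ^+ 2 - 2 < c in A *)
have [t /= /[!in_itv]/= /andP[]] :=
  nonnegligible_witness (itvoo_nonnegligible _ _ ms) (negligibleU nAF nBad).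
rewrite gt_max => /andP[ct st] ts /not_orP[nAFt nBt].
have Ft : F t.
  by apply: contrapT => nFt; apply: nAFt; split => //; apply/andP; split; [exact: ltW|nra].
have t_itv : -2 < t < 2 by apply/andP; split; nra.
have At : A (t ^+ 2 - 2) by split; [rewrite lerBrDr addNr sqr_ge0|exact: propagate].
have := ge_inf Alb At; nra.
Qed.

Lemma negligible_itv_dichotomy :
  lambda.-negligible (`[-2, 2] `&` F) \/ lambda.-negligible (`[-2, 2] `\` F).
Proof.
have [|/nonnegligible_witness nF] := pselect (lambda.-negligible (`[-2, 2] `&` F)).
  by left.
have nN := negligibleU nBad (negligibleU (negligible_set1 (-2)) (negligible_set1 2)).
have [t0 [/= /[!in_itv]/= /andP[t0_ge t0_le] Ft0]] := nF _ nN.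
move=> /not_orP[nBt0 /not_orP[/eqP t0N2 /eqP t02]].
right; apply: (negligible_itvcc_setD_propagate t0) => //.
by rewrite !lt_neqAle t0_ge t0_le eq_sym t0N2 t02.
Qed.

End propagation.
End real_line.

Section invariant_sets.
Context {R : realType}.
Local Notation lambda := (@lebesgue_measure R).
Local Notation lambda2 := (lambda \x lambda)%E.

Definition fibres_over (F : set R) : set (R * R) := domD R `&` (setT `*` F).

Lemma measurable_domD : measurable (domD R).
Proof.
have mle (f g : R * R -> R) : measurable_fun setT f -> measurable_fun setT g ->
    measurable [set z | f z <= g z].
  by move=> mf mg; rewrite -[X in measurable X]setTI; exact: measurable_fun_le.
have m1 : measurable_fun setT (fun z : R * R => z.1) by exact: measurable_fst.
have m2 : measurable_fun setT (fun z : R * R => z.2) by exact: measurable_snd.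
rewrite (_ : domD R = [set z | -2 <= z.1] `&` [set z | z.1 <= 2] `&`
   [set z | -2 <= z.2] `&` [set z | z.2 <= 2] `&` [set z | z.1 ^+ 2 - 2 <= z.2]).
  by repeat apply: measurableI; apply: mle => //; apply: measurable_funB => //;
    exact: measurable_funX.
apply/seteqP; split => z /=.
  by rewrite /domD/= => -[/andP[-> ->] [/andP[-> ->] ->]].
by move=> [[[[h1 h2] h3] h4] h5]; rewrite /domD/= h1 h2 h3 h4.
Qed.

Lemma fibres_over_propagate (F : set R) (t : R) : -2 < t < 2 -> F t ->
  lambda.-negligible (ysection (fibres_over F `\` @phimap R @^-1` fibres_over F) t) ->
  lambda.-negligible (`[t ^+ 2 - 2, 2] `\` F).
Proof.
move=> /andP[t_gt t_lt] Ft nZt.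
pose f x := x ^+ 2 * (t - 2) + 2.
have lipf : 16.-lipschitz_(`[-2, 2]%classic) f.
  move=> [x y] [/= /[!in_itv]/= /andP[x_ge x_le] /andP[y_ge y_le]].
  rewrite /f (_ : _ - _ = (t - 2) * (x + y) * (x - y)); last by ring.
  rewrite normrM; apply: ler_wpM2r => //; rewrite normrM (le_trans _ (_ : 4 * 4 <= 16)) //.
    by apply: ler_pM => //; rewrite ler_norml; apply/andP; split; lra.
  by lra.
apply: negligibleS (lipschitz_image_negligible _ _ _ _ _ lipf _ nZt) => //; last first.
  by move=> x; rewrite /ysection/= inE => -[[[? _] _] _]; rewrite in_itv.
move=> u [/= /[!in_itv]/= /andP[u_ge u_le] nFu].
(* the point of the fibre over t that phi sends to height u *)
pose x := Num.sqrt ((2 - u) / (2 - t)).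
have q_ge0 : 0 <= (2 - u) / (2 - t) by apply: divr_ge0; lra.
have x2 : x ^+ 2 = (2 - u) / (2 - t) := sqr_sqrtr q_ge0.
have x2_le : x ^+ 2 <= t + 2 by rewrite x2 ler_pdivrMr; nra.
have fx : f x = u.
  by rewrite /f x2 -[t - 2]opprB mulrN divfK ?subr_eq0 ?gt_eqF //; ring.
exists x => //; rewrite /ysection/= inE; split.
- split; last by split.
  split; last by split => /=; lra.
  by have := sqrtr_ge0 ((2 - u) / (2 - t)); rewrite /= -/x => x_ge0; apply/andP; split; nra.
- by move=> [_ [_]]; rewrite /= -/(f x) fx.
Qed.

Lemma negligible_setD_preimage_phimap (E P : set (R * R)) :
  lambda2.-negligible (E `\` P) -> lambda2.-negligible (P `\` E) ->
  lambda2.-negligible (@phimap R @` E `\` E) ->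
  lambda2.-negligible (P `\` @phimap R @^-1` P).
Proof.
move=> nEP nPE nphiE.
have nphiEP := negligible_preimage_phimap _ nEP.
have nphiphiE := negligible_preimage_phimap _ nphiE.
apply: negligibleS (negligibleU nPE (negligibleU nphiEP nphiphiE)) => z [Pz nPphiz].
have [Ez|] := pselect (E z); [right|by left].
by have [Ephiz|nEphiz] := pselect (E (phimap z)); [left|right; split => //; exists z].
Qed.

Lemma measurable_fibres_over (F : set R) : measurable F -> measurable (fibres_over F).
Proof. by move=> mF; apply: measurableI; [exact: measurable_domD|exact: measurableX]. Qed.

Lemma negligible_fibres_over (F : set R) :
  lambda.-negligible (`[-2, 2] `&` F) -> lambda2.-negligible (fibres_over F).
Proof.
move=> /(negligible_setTX lambda lambda) nF; apply: negligibleS nF => z.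
by move=> [[_ [t_itv _]] [_ Ft]]; split => //; split => //; rewrite /= in_itv.
Qed.

Lemma negligible_domD_setD_fibres_over (F : set R) :
  lambda.-negligible (`[-2, 2] `\` F) -> lambda2.-negligible (domD R `\` fibres_over F).
Proof.
move=> /(negligible_setTX lambda lambda) nF; apply: negligibleS nF => z [Dz nPz].
split => //; split; first by case: Dz => _ [t_itv _]; rewrite /= in_itv.
by move=> Ft; apply: nPz.
Qed.

Definition full_fibres (E : set (R * R)) : set R :=
  [set t | lambda.-negligible (ysection (domD R `\` E) t)].

Section full_fibres.
Variables (E : set (R * R)) (mE : measurable E).
Local Notation P := (fibres_over (full_fibres E)).

Lemma measurable_full_fibres : measurable (full_fibres E).
Proof. by apply: measurable_negligible_ysection; exact: measurableD measurable_domD mE. Qed.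

Lemma negligible_fibres_over_setD : lambda2.-negligible (P `\` E).
Proof.
have mPE : measurable (P `\` E).
  by apply: measurableD => //; apply: measurable_fibres_over; exact: measurable_full_fibres.
apply/negligible_ysectionP => //.
apply: negligibleS (negligible_set0 _) => t /= nt; exfalso; apply: nt.
have [Ft|nFt] := pselect (full_fibres E t).
  by apply: negligibleS Ft => x; rewrite /ysection/= !inE => -[[? _] ?].
apply: negligibleS (negligible_set0 _) => x; rewrite /ysection/= inE.
by move=> -[[_ [_ Ft]] _].
Qed.

Variables (N : set R) (nN : lambda.-negligible N).
Hypothesis fibE : forall t, (@projp R @` E) t -> ~ N t ->
  lambda.-negligible (fiberx t `\` slicex E t) \/
  lambda.-negligible (fiberx t `&` slicex E t).

Lemma negligible_setD_fibres_over : E `<=` domD R -> lambda2.-negligible (E `\` P).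
Proof.
move=> ED; have mEP : measurable (E `\` P).
  by apply: measurableD => //; apply: measurable_fibres_over; exact: measurable_full_fibres.
apply/negligible_ysectionP => //; apply: negligibleS nN => t nEPt.
apply: contrapT => Nt; apply: nEPt.
have [[x Ext]|noE] := pselect (exists x, E (x, t)); last first.
  apply: negligibleS (negligible_set0 _) => y; rewrite /ysection/= inE.
  by move=> -[Eyt _]; apply: noE; exists y.
have fibD : fiberx t `\` slicex E t = ysection (domD R `\` E) t.
  by apply/seteqP; split => y; rewrite /ysection/= inE.
have pEt : (@projp R @` E) t by exists (x, t).
case: (fibE t pEt Nt) => [full|null].
  apply: negligibleS (negligible_set0 _) => y; rewrite /ysection/= inE.
  by move=> -[Eyt]; apply; split; [exact: ED|split => //; rewrite /full_fibres/= -fibD].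
apply: negligibleS null => y; rewrite /ysection/= inE => -[Eyt _].
by split => //; exact: ED.
Qed.

End full_fibres.

End invariant_sets.

Theorem lemma3p3 (R : realType) (E : set (R * R)) :
  measurable E -> E `<=` domD R ->
  (* (i) phi(E) \ E is Lebesgue-null *)
  (leb2 R).-negligible ((phimap (R:=R)) @` E `\` E) ->
  (* (ii) for a.e. t in p(E), the fiber is a.e. contained in E or in D \ E *)
  (exists N : set R, (@lebesgue_measure R).-negligible N /\
     forall t, ((projp (R:=R)) @` E) t -> ~ N t ->
       (@lebesgue_measure R).-negligible (fiberx t `\` slicex E t) \/
       (@lebesgue_measure R).-negligible (fiberx t `&` slicex E t)) ->
  (leb2 R).-negligible E \/ (leb2 R).-negligible (domD R `\` E).
Proof.
rewrite /leb2 => mE ED nphiE [N [nN fibE]].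
set F := full_fibres E; set P := fibres_over F.
have mF : measurable F := measurable_full_fibres _ mE.
have nEP := negligible_setD_fibres_over _ mE _ nN fibE ED.
have nPE := negligible_fibres_over_setD _ mE.
have nZ := negligible_setD_preimage_phimap _ _ nEP nPE nphiE.
set Z := P `\` @phimap R @^-1` P.
have mZ : measurable Z.
  apply: measurableD; first exact: measurable_fibres_over.
  rewrite -[X in measurable X]setTI.
  exact: measurable_phimap measurableT _ (measurable_fibres_over _ mF).
have nBad : (@lebesgue_measure R).-negligible
    [set t | ~ (@lebesgue_measure R).-negligible (ysection Z t)].
  by apply/negligible_ysectionP.
have [nF|nDF] := negligible_itv_dichotomy _ _ nBad
  (fun t t_itv Ft nBt => fibres_over_propagate _ _ t_itv Ft (contrapT nBt)).
- have nP := negligible_fibres_over _ nF.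
  left; apply: negligibleS (negligibleU nEP nP) => z Ez.
  by have [|] := pselect (P z); [right|left].
- have nDP := negligible_domD_setD_fibres_over _ nDF.
  right; apply: negligibleS (negligibleU nPE nDP) => z [Dz nEz].
  by have [|] := pselect (P z); [left|right].
Qed.
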